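(* Under the hypotheses of the previous statement (i.e. $c>0$, $m+\frac d2>1$, $\phi_k$ a bounded real solution on $[-1,1]$ of $\big((1-\eta)(1+\eta)^{m+\frac d2}\phi_k'\big)'+\big(\alpha_k-\frac{c^2(1+\eta)}{8}\big)(1+\eta)^{m+\frac d2-1}\phi_k=0$ normalized by $\int_{-1}^1(1+t)^{m+\frac d2-1}|\phi_k(t)|^2dt=2^{m+\frac d2-1}$, and $\alpha_k>\frac{c^2}{4}$), we have $$\sup_{\eta\in[a_{m,d},1]}|\phi_k(\eta)|\le\frac{3\sqrt3}{2}\sqrt{2^{m+\frac d2+1}\big(m+\tfrac d2-1\big)}\;\alpha_k^{1/2},\qquad a_{m,d}=\frac{2m+d-2}{2m+d}.$$
   Context: This is the radial equation of ball prolate spheroidal wave functions $\psi(x)=r^m\phi_k(2r^2-1)Y(\hat x)$, where $\alpha_k=\frac14(\chi^{(m)}_k(c)-m(m+d))$ and $\chi^{(m)}_k(c)$ is the corresponding eigenvalue of $\mathcal{L}_c=-\nabla\cdot(1-\|x\|^2)\nabla-\Delta_0+c^2\|x\|^2$. *)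

From Stdlib Require Import Reals Lra.
From Coquelicot Require Import Coquelicot.
Open Scope R_scope.

(* Real power x^y with the convention 0^y = 0 (for x <= 0); only used with
   y > 0 at x = 0, and with x > 0 elsewhere, where it is Rpower x y. *)
Definition rpow (x y : R) : R := if Rle_dec x 0 then 0 else Rpower x y.

Definition beta_md (m d : nat) : R := INR m + INR d / 2.

Definition a_md (m d : nat) : R :=
  (2 * INR m + INR d - 2) / (2 * INR m + INR d).

Definition flux (m d : nat) (phi : R -> R) (y : R) : R :=
  (1 - y) * rpow (1 + y) (beta_md m d) * Derive phi y.

From Stdlib Require Import Reals Lra Classical.
From Coquelicot Require Import Coquelicot.
Open Scope R_scope.

(* Write [b = m + d/2] and [F = (1 - x) (1 + x)^b phi'] for the flux, so that [F' = - w phi]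
   with [w = (alpha - c^2 (1 + x) / 8) (1 + x)^(b-1) > 0].  A bounded solution has
   [F = O(1 - x)] at [1] and [F = O(1 + x)] at [-1]: otherwise
   [phi' = F / ((1 - x) (1 + x)^b)] would make [phi] diverge logarithmically.

   First, [alpha >= b + 1].  Otherwise the Pruefer-type functional
   [G = phi F - (1 - x) (1 + x)^b phi^2 / (x - x0)], [x0 = (b - 1) / (b + 1)], satisfies
   [G' >= (b + 1 - alpha) (1 + x)^(b-1) phi^2] away from [x0]; tending to [0] at [-1] and
   [1], it is [<= 0] on [(x0, 1)] and [>= 0] on [(-1, x0)].  At a zero of [phi] we have
   [G = 0], so [G], hence [phi], vanishes on the whole side of that zero away from [x0],
   and then everywhere by uniqueness for the ODE, contradicting the normalization.  If
   [phi] has no zero, [F] is strictly monotone yet vanishes at both endpoints.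

   Second, let [H] be the supremum of [|phi|] on [[a, 1)], [a = (b - 1) / b].  There
   [|F| <= alpha 2^(b-1) H (1 - x)], so [|phi'| <= L = alpha 2^(b-1) H / (1 + a)^b] and
   [|phi|] dominates a tent of height [|phi x|] and half-width [min (|phi x| / L) ((1 - a)/2)]
   around [x].  The normalization bounds the weighted mass of this tent, which yields
   [|phi x|^2 <= U H] with [U^2 = 27/4 2^(b+1) (b - 1) alpha] (here [alpha >= b + 1] is
   used), hence [H <= U]; the endpoint [x = 1] follows by continuity. *)

(** * Powers of [1 + x] *)

Lemma exp_le_compat x y : x <= y -> exp x <= exp y.
Proof. intros [H|H]; [now left; apply exp_increasing | subst; lra]. Qed.

Definition pow1p (y x : R) : R := exp (y * ln (1 + x)).

Lemma pow1p_gt0 y x : 0 < pow1p y x.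
Proof. apply exp_pos. Qed.

Lemma pow1p_0 y : pow1p y 0 = 1.
Proof. unfold pow1p. rewrite Rplus_0_r, ln_1, Rmult_0_r. apply exp_0. Qed.

Lemma rpow_pow1p y x : -1 < x -> rpow (1 + x) y = pow1p y x.
Proof. intros Hx. unfold rpow, pow1p, Rpower. destruct (Rle_dec (1 + x) 0); [lra | easy]. Qed.

Lemma rpow_nonneg x y : 0 <= rpow x y.
Proof. unfold rpow. destruct (Rle_dec x 0); [lra | left; apply exp_pos]. Qed.

Lemma pow1p_pred y x : -1 < x -> pow1p y x = (1 + x) * pow1p (y - 1) x.
Proof.
  intros Hx. unfold pow1p.
  replace (y * ln (1 + x)) with (ln (1 + x) + (y - 1) * ln (1 + x)) by ring.
  rewrite exp_plus, exp_ln; lra.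
Qed.

Lemma pow1p_le y x1 x2 : 0 <= y -> -1 < x1 <= x2 -> pow1p y x1 <= pow1p y x2.
Proof.
  intros Hy Hx. apply exp_le_compat, Rmult_le_compat_l; [easy|]. apply ln_le; lra.
Qed.

Lemma ln_ge_1_minus_inv y : 0 < y -> 1 - / y <= ln y.
Proof.
  intros Hy. pose proof (exp_ineq1_le (- ln y)) as Hexp.
  rewrite exp_Ropp, exp_ln in Hexp by easy. lra.
Qed.

Lemma exp_neg_3_4_ge : 2 / 5 <= exp (- (3 / 4)).
Proof.
  assert (H3 : exp (3 / 4) ^ 4 <= 27).
  { replace (exp (3 / 4) ^ 4) with (exp 1 * exp 1 * exp 1)
      by (unfold pow; rewrite Rmult_1_r, <- !exp_plus; f_equal; field).
    pose proof exp_le_3. pose proof (exp_pos 1).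
    assert (exp 1 * exp 1 <= 3 * 3) by (apply Rmult_le_compat; lra).
    assert (exp 1 * exp 1 * exp 1 <= 3 * 3 * 3) by (apply Rmult_le_compat; nra). lra. }
  assert (Hl : exp (3 / 4) < 5 / 2).
  { destruct (Rlt_or_le (exp (3 / 4)) (5 / 2)); [easy|].
    assert ((5 / 2) ^ 4 <= exp (3 / 4) ^ 4) by (apply pow_incr; lra). simpl in *. lra. }
  rewrite exp_Ropp. pose proof (exp_pos (3 / 4)).
  apply (Rmult_le_reg_r (exp (3 / 4))); [easy|]. rewrite Rinv_l; nra.
Qed.

Lemma pow1p_1_ge2 b : 1 <= b -> 2 <= pow1p b 1.
Proof.
  intros Hb. unfold pow1p. replace (1 + 1) with 2 by ring.
  rewrite <- (exp_ln 2) at 1 by lra. apply exp_le_compat.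
  assert (0 < ln 2) by (rewrite <- ln_1; apply ln_increasing; lra). nra.
Qed.

(* [(1 + a)^b = 2^b (1 - 1/(2b))^b >= 2^b e^(-b/(2b-1))] for [a = (b - 1)/b]. *)
Lemma pow1p_ratio_ge b : 3 / 2 <= b -> 2 / 5 * pow1p b 1 <= pow1p b ((b - 1) / b).
Proof.
  intros Hb. unfold pow1p.
  replace (1 + (b - 1) / b) with (2 * (1 - / (2 * b))) by (field; lra).
  replace (1 + 1) with 2 by ring.
  assert (Hinv : / (2 * b) < 1).
  { rewrite <- Rinv_1. apply Rinv_lt_contravar; lra. }
  rewrite ln_mult by lra.
  pose proof (ln_ge_1_minus_inv (1 - / (2 * b)) ltac:(lra)) as Hl.
  replace (1 - / (1 - / (2 * b))) with (- / (2 * b - 1)) in Hl by (field; lra).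
  assert (Hfrac : b / (2 * b - 1) <= 3 / 4).
  { apply (Rmult_le_reg_r (2 * b - 1)); [lra|].
    unfold Rdiv. rewrite Rmult_assoc, Rinv_l; lra. }
  assert (Hbl : b * (- / (2 * b - 1)) <= b * ln (1 - / (2 * b)))
    by (apply Rmult_le_compat_l; lra).
  replace (b * - / (2 * b - 1)) with (- (b / (2 * b - 1))) in Hbl by (field; lra).
  rewrite Rmult_plus_distr_l, exp_plus.
  pose proof (exp_pos (b * ln 2)).
  assert (exp (- (3 / 4)) <= exp (b * ln (1 - / (2 * b)))) by (apply exp_le_compat; lra).
  pose proof exp_neg_3_4_ge. nra.
Qed.

Lemma pow1p_pred_ratio_ge b : 3 / 2 <= b -> 1 / 5 * pow1p b 1 <= pow1p (b - 1) ((b - 1) / b).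
Proof.
  intros Hb. pose proof (pow1p_ratio_ge b Hb) as H.
  assert (Ha : 0 <= (b - 1) / b <= 1).
  { split; [apply Rmult_le_pos; [lra | left; apply Rinv_0_lt_compat; lra]|].
    apply (Rmult_le_reg_r b); [lra|]. unfold Rdiv. rewrite Rmult_assoc, Rinv_l; lra. }
  rewrite (pow1p_pred b ((b - 1) / b)) in H by lra.
  pose proof (pow1p_gt0 (b - 1) ((b - 1) / b)). nra.
Qed.

Lemma ratio_constants_le b al : 3 / 2 <= b -> b + 1 <= al ->
  let E1 := pow1p (b - 1) 1 in let Pa := pow1p b ((b - 1) / b) in
  let Qa := pow1p (b - 1) ((b - 1) / b) in
  let U2 := 27 / 4 * (2 * pow1p b 1) * (b - 1) * al in
  3 * E1 / Qa * (al * E1 / Pa) <= U2 /\ 3 * E1 / Qa * (2 * b) <= U2.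
Proof.
  intros Hb Hal E1 Pa Qa U2.
  pose proof (pow1p_ratio_ge b Hb) as HP. pose proof (pow1p_pred_ratio_ge b Hb) as HQ.
  pose proof (pow1p_1_ge2 b ltac:(lra)) as HE.
  rewrite (pow1p_pred b 1) in HP, HQ, HE by lra. replace (1 + 1) with 2 in * by ring.
  fold E1 Pa Qa in HP, HQ, HE.
  assert (HE1 : 1 <= E1) by lra. assert (HP0 : 0 < Pa) by lra. assert (HQ0 : 0 < Qa) by lra.
  unfold U2. rewrite (pow1p_pred b 1) by lra. replace (1 + 1) with 2 by ring. fold E1.
  split.
  - replace (3 * E1 / Qa * (al * E1 / Pa)) with (3 * E1 * E1 * al / (Qa * Pa)) by (field; lra).
    apply Rle_trans with (3 * E1 * E1 * al / (2 / 5 * E1 * (4 / 5 * E1))).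
    + unfold Rdiv. apply Rmult_le_compat_l; [nra |].
      apply Rinv_le_contravar; [nra | apply Rmult_le_compat; lra].
    + replace (3 * E1 * E1 * al / (2 / 5 * E1 * (4 / 5 * E1))) with (75 / 8 * al) by (field; lra).
      assert (1 / 2 * al <= (b - 1) * al) by (apply Rmult_le_compat_r; lra).
      assert (1 / 2 * al <= E1 * ((b - 1) * al)) by nra. nra.
  - apply Rle_trans with (15 * b).
    + replace (3 * E1 / Qa * (2 * b)) with (6 * b * (E1 / Qa)) by (field; lra).
      replace (15 * b) with (6 * b * (5 / 2)) by field.
      apply Rmult_le_compat_l; [lra |].
      apply (Rmult_le_reg_r Qa); [easy|]. unfold Rdiv. rewrite Rmult_assoc, Rinv_l; lra.
    + assert ((b - 1) * (b + 1) <= (b - 1) * al) by (apply Rmult_le_compat_l; lra).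
      assert ((b - 1) * al <= E1 * ((b - 1) * al))
        by (rewrite <- (Rmult_1_l ((b - 1) * al)) at 1; apply Rmult_le_compat_r; nra).
      nra.
Qed.

(** * Calculus on intervals *)

Lemma Derive_mvt (f : R -> R) a b : a <= b ->
  (forall x, a <= x <= b -> ex_derive f x) ->
  exists c, a <= c <= b /\ f b - f a = Derive f c * (b - a).
Proof.
  intros Hab Hd.
  destruct (MVT_gen f a b (Derive f)) as [c [Hc Heq]];
    rewrite ?Rmin_left, ?Rmax_right in *; try lra.
  - intros x Hx. apply Derive_correct, Hd. lra.
  - intros x Hx. apply continuity_pt_filterlim, (ex_derive_continuous f), Hd. lra.
  - exists c. now split.
Qed.

Lemma Derive_nonneg_le (f : R -> R) a b : a <= b ->
  (forall x, a <= x <= b -> ex_derive f x /\ 0 <= Derive f x) -> f a <= f b.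
Proof.
  intros Hab Hd. destruct (Derive_mvt f a b Hab) as [c [Hc Heq]].
  - intros x Hx. apply Hd, Hx.
  - assert (0 <= Derive f c * (b - a)) by (apply Rmult_le_pos; [apply Hd|]; lra). lra.
Qed.

Lemma Derive_bounded_Lipschitz (f : R -> R) l r B :
  (forall u, l <= u <= r -> ex_derive f u /\ Rabs (Derive f u) <= B) ->
  forall s t, l <= s <= r -> l <= t <= r -> Rabs (f s - f t) <= B * Rabs (s - t).
Proof.
  intros Hd.
  assert (Hle : forall s t, l <= t <= s -> s <= r -> Rabs (f s - f t) <= B * Rabs (s - t)).
  { intros s t Ht Hs. destruct (Derive_mvt f t s) as [c [Hc ->]]; try lra.
    - intros x Hx. apply Hd. lra.
    - rewrite Rabs_mult. apply Rmult_le_compat_r; [apply Rabs_pos | apply Hd; lra]. }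
  intros s t Hs Ht. destruct (Rle_or_lt t s).
  - apply Hle; lra.
  - rewrite Rabs_minus_sym, (Rabs_minus_sym s). apply Hle; lra.
Qed.

Lemma Derive_locally_zero (f : R -> R) l r x : l < x < r ->
  (forall y, l < y < r -> f y = 0) -> Derive f x = 0.
Proof.
  intros Hx Hf. apply is_derive_unique, (is_derive_ext_loc (fun _ => 0)).
  - assert (Hd : 0 < Rmin (x - l) (r - x)) by (apply Rmin_case; lra).
    exists (mkposreal _ Hd). intros y Hy. symmetry. apply Hf.
    apply (Rabs_lt_between' y x) in Hy.
    pose proof (Rmin_l (x - l) (r - x)). pose proof (Rmin_r (x - l) (r - x)). simpl in *. lra.
  - apply (is_derive_const 0).
Qed.

Lemma Derive_reflect (f : R -> R) x : ex_derive f (- x) ->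
  ex_derive (fun y => f (- y)) x /\ Derive (fun y => f (- y)) x = - Derive f (- x).
Proof.
  intros Hf. assert (Hopp : is_derive (fun y : R => - y) x (-1)) by (auto_derive; easy).
  assert (Hex : ex_derive (fun y : R => - y) x) by now exists (-1).
  split; [now apply (ex_derive_comp f (fun y => - y)) |].
  rewrite (Derive_comp f (fun y => - y)), (is_derive_unique _ _ _ Hopp) by easy. ring.
Qed.

Lemma continuous_zero_of_near_zeros (f : R -> R) x : continuous f x ->
  (forall e, 0 < e -> exists s, Rabs (s - x) < e /\ f s = 0) -> f x = 0.
Proof.
  intros Hc Hz. destruct (Req_dec (f x) 0) as [|Hne]; [easy | exfalso].
  assert (Hfx : 0 < Rabs (f x)) by now apply Rabs_pos_lt.
  destruct (proj1 (filterlim_locally f (f x)) Hc (mkposreal _ Hfx)) as [e He].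
  destruct (Hz e (cond_pos e)) as [s [Hs Hfs]].
  specialize (He s Hs). change (Rabs (f s - f x) < Rabs (f x)) in He.
  rewrite Hfs, Rminus_0_l, Rabs_Ropp in He. lra.
Qed.

Lemma zero_between (f : R -> R) p q : p < q ->
  (forall x, p <= x <= q -> ex_derive f x) -> f p * f q < 0 -> exists z, p <= z <= q /\ f z = 0.
Proof.
  intros Hpq Hd Hneg.
  assert (Hfp : f p <> 0) by (intros H0; rewrite H0 in Hneg; lra).
  destruct (Ranalysis5.IVT_interv (fun t => - f p * f t) p q) as [z [Hz Hz0]]; [| easy | | |].
  - intros a Ha. apply continuity_pt_filterlim, (ex_derive_continuous (fun t => - f p * f t)).
    apply ex_derive_scal, Hd, Ha.
  - assert (0 < f p * f p) by (apply Rsqr_pos_lt, Hfp). lra.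
  - lra.
  - exists z. split; [easy|]. apply (Rmult_eq_reg_l (- f p)); lra.
Qed.

Lemma sign_exists x : exists sg, Rabs sg = 1 /\ sg * x = Rabs x.
Proof.
  destruct (Rle_or_lt 0 x).
  - exists 1. rewrite Rabs_R1, Rabs_right by lra. split; ring.
  - exists (-1). rewrite (Rabs_left (-1)), (Rabs_left x) by lra. split; ring.
Qed.

Lemma constant_sign (f : R -> R) :
  (forall x, -1 < x < 1 -> ex_derive f x) -> (forall x, -1 < x < 1 -> f x <> 0) ->
  exists sg, Rabs sg = 1 /\ forall x, -1 < x < 1 -> 0 < sg * f x.
Proof.
  intros Hd Hnz. destruct (sign_exists (f 0)) as [sg [Hsg Hsg0]].
  assert (Hsg2 : sg * sg = 1).
  { rewrite <- (Rabs_right (sg * sg)) by nra. rewrite Rabs_mult, Hsg. ring. }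
  assert (Hsgf0 : 0 < sg * f 0) by (rewrite Hsg0; apply Rabs_pos_lt, Hnz; lra).
  exists sg. split; [easy|]. intros x Hx.
  destruct (Rlt_or_le 0 (sg * f x)) as [|Hle]; [easy | exfalso].
  assert (Hlt : sg * f x < 0).
  { destruct Hle as [|Heq]; [easy|]. exfalso. apply (Hnz x Hx).
    apply (Rmult_eq_reg_l sg); [lra | intros Hs; rewrite Hs in Hsg2; lra]. }
  assert (Hprod : f x * f 0 < 0).
  { replace (f x * f 0) with ((sg * f x) * (sg * f 0))
      by (transitivity (sg * sg * (f x * f 0)); [ring | rewrite Hsg2; ring]).
    nra. }
  destruct (Rlt_or_le x 0) as [Hx0|Hx0]; [| destruct (Req_dec x 0) as [->|Hne]; [lra|]].
  - destruct (zero_between f x 0) as [z [Hz Hz0]]; [easy | intros; apply Hd; lra | easy |].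
    apply (Hnz z); lra.
  - destruct (zero_between f 0 x) as [z [Hz Hz0]]; [lra | intros; apply Hd; lra | lra |].
    apply (Hnz z); lra.
Qed.

Lemma abs_le_at_right_end (f : R -> R) a R0 : -1 <= a < 1 ->
  filterlim f (within (fun y => -1 <= y <= 1) (locally 1)) (locally (f 1)) ->
  (forall y, a <= y < 1 -> Rabs (f y) <= R0) -> Rabs (f 1) <= R0.
Proof.
  intros Ha Hc Hf. destruct (Rle_or_lt (Rabs (f 1)) R0) as [|Hgt]; [easy | exfalso].
  assert (He : 0 < Rabs (f 1) - R0) by lra.
  destruct (proj1 (filterlim_locally f (f 1)) Hc (mkposreal _ He)) as [del Hdel].
  set (y := Rmax a (1 - del / 2)).
  assert (Hy : a <= y < 1 /\ 1 - del / 2 <= y).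
  { pose proof (cond_pos del). unfold y.
    split; [split; [apply Rmax_l | apply Rmax_case; lra] | apply Rmax_r]. }
  assert (Hfy : Rabs (f y - f 1) < Rabs (f 1) - R0).
  { apply (Hdel y); [| lra]. change (Rabs (y - 1) < del).
    pose proof (cond_pos del). rewrite Rabs_left; lra. }
  pose proof (Hf y (proj1 Hy)). pose proof (Rabs_triang_inv (f 1) (f y)).
  rewrite Rabs_minus_sym in Hfy. lra.
Qed.

(* [f s + k ln (1 - s)] is nondecreasing, while [k ln (1 - s)] tends to [-oo]. *)
Lemma log_growth_unbounded (f : R -> R) t k M : t < 1 -> 0 < k ->
  (forall s, t < s < 1 -> ex_derive f s /\ k / (1 - s) <= Derive f s) ->
  exists s, t < s < 1 /\ M < f s.
Proof.
  intros Ht Hk Hd.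
  set (h := fun s => f s + k * ln (1 - s)).
  set (t1 := (t + 1) / 2).
  assert (Hh : forall s, t1 <= s < 1 -> h t1 <= h s).
  { intros s Hs. apply Derive_nonneg_le; [lra|]. intros x Hx.
    assert (Hfx : ex_derive f x /\ k / (1 - x) <= Derive f x) by (apply Hd; unfold t1 in *; lra).
    assert (Hdh : is_derive h x (Derive f x - k / (1 - x))).
    { unfold h. auto_derive; [repeat split; [apply Hfx | lra] |].
      change (Derive (fun y => f y) x) with (Derive f x). field. lra. }
    split; [now exists (Derive f x - k / (1 - x)) |].
    rewrite (is_derive_unique _ _ _ Hdh). lra. }
  set (X := Rmax (- ln (1 - t1)) ((M - h t1) / k) + 1).
  assert (HX1 := Rmax_l (- ln (1 - t1)) ((M - h t1) / k)).
  assert (HX2 := Rmax_r (- ln (1 - t1)) ((M - h t1) / k)).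
  assert (Hexp : exp (- X) < 1 - t1).
  { rewrite <- (exp_ln (1 - t1)) by (unfold t1; lra). apply exp_increasing. unfold X. lra. }
  assert (Hs : t1 <= 1 - exp (- X) < 1) by (pose proof (exp_pos (- X)); lra).
  exists (1 - exp (- X)). split; [unfold t1 in *; lra |].
  specialize (Hh _ Hs). unfold h in Hh at 2.
  replace (1 - (1 - exp (- X))) with (exp (- X)) in Hh by ring. rewrite ln_exp in Hh.
  assert (k * ((M - h t1) / k + 1) <= k * X) by (apply Rmult_le_compat_l; unfold X; lra).
  assert (k * ((M - h t1) / k + 1) = M - h t1 + k) by (field; lra).
  lra.
Qed.

(* Otherwise [sg F >= delta > 0] near [1] for a sign [sg], so [sg g' >= delta / (P (1 - s))]
   and [g] grows like a logarithm. *)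
Lemma flux_bound_right (g F q : R -> R) t B P M : t < 1 -> 0 < P ->
  (forall s, t <= s < 1 -> ex_derive F s /\ Rabs (Derive F s) <= B) ->
  (forall s, t < s < 1 -> ex_derive g s /\ Derive g s = F s / q s /\ 0 < q s <= P * (1 - s)) ->
  (forall s, t < s < 1 -> Rabs (g s) <= M) ->
  Rabs (F t) <= B * (1 - t).
Proof.
  intros Ht HP HF Hg HM.
  destruct (Rle_or_lt (Rabs (F t)) (B * (1 - t))) as [|Hlt]; [easy | exfalso].
  set (delta := Rabs (F t) - B * (1 - t)).
  assert (Hdelta : 0 < delta) by (unfold delta; lra).
  destruct (sign_exists (F t)) as [sg [Hsg HsgF]].
  assert (HB : 0 <= B) by (pose proof (Rabs_pos (Derive F t)); pose proof (HF t); lra).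
  assert (HFs : forall s, t < s < 1 -> delta <= sg * F s).
  { intros s Hs.
    assert (Hdiff : Rabs (F s - F t) <= B * Rabs (s - t)).
    { apply (Derive_bounded_Lipschitz F t s); [intros u Hu; apply HF|..]; lra. }
    rewrite (Rabs_right (s - t)) in Hdiff by lra.
    assert (Hsgdiff : Rabs (sg * F s - sg * F t) <= B * (s - t)).
    { rewrite <- Rmult_minus_distr_l, Rabs_mult, Hsg. lra. }
    assert (B * (s - t) <= B * (1 - t)) by (apply Rmult_le_compat_l; lra).
    apply Rabs_le_between in Hsgdiff. unfold delta. lra. }
  destruct (log_growth_unbounded (fun s => sg * g s) t (delta / P) M) as [s [Hs HMs]];
    [easy | apply Rdiv_lt_0_compat; lra | |].
  - intros s Hs. destruct (Hg s Hs) as [Hdg [Hgq Hq]].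
    split; [now apply ex_derive_scal |].
    rewrite Derive_scal, Hgq. specialize (HFs s Hs).
    replace (sg * (F s / q s)) with (sg * F s / q s) by (field; lra).
    replace (delta / P / (1 - s)) with (delta / (P * (1 - s))) by (field; lra).
    apply Rle_trans with (delta / q s).
    + apply Rmult_le_compat_l; [lra|]. apply Rinv_le_contravar; lra.
    + apply Rmult_le_compat_r; [left; apply Rinv_0_lt_compat|]; lra.
  - pose proof (HM s Hs). pose proof (Rle_abs (sg * g s)) as Habs.
    rewrite Rabs_mult, Hsg in Habs. lra.
Qed.

Lemma flux_bound_left (g F q : R -> R) t B P M : -1 < t -> 0 < P ->
  (forall s, -1 < s <= t -> ex_derive F s /\ Rabs (Derive F s) <= B) ->
  (forall s, -1 < s < t -> ex_derive g s /\ Derive g s = F s / q s /\ 0 < q s <= P * (1 + s)) ->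
  (forall s, -1 < s < t -> Rabs (g s) <= M) ->
  Rabs (F t) <= B * (1 + t).
Proof.
  intros Ht HP HF Hg HM.
  replace (Rabs (F t)) with (Rabs (- F (- - t))) by (now rewrite Ropp_involutive, Rabs_Ropp).
  replace (1 + t) with (1 - - t) by ring.
  apply (flux_bound_right (fun s => g (- s)) (fun s => - F (- s)) (fun s => q (- s)) (- t) B P M);
    [lra | easy | intros s Hs | intros s Hs | intros s Hs; apply HM; lra].
  - destruct (HF (- s)) as [HdF HB]; [lra|].
    destruct (Derive_reflect F s HdF) as [Hex HD].
    split; [exact (ex_derive_opp (fun y => F (- y)) s Hex) |].
    rewrite Derive_opp, HD, !Rabs_Ropp. easy.
  - destruct (Hg (- s)) as [Hdg [Hgq Hq]]; [lra|].
    destruct (Derive_reflect g s Hdg) as [Hex HD].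
    split; [easy|]. rewrite HD, Hgq. split; [field; lra | lra].
Qed.

Lemma nonpos_of_nondecreasing_to_zero (G : R -> R) y e C : y < e -> 0 <= C ->
  (forall t, y <= t < e -> G y <= G t /\ G t <= C * (e - t)) -> G y <= 0.
Proof.
  intros Hy HC HG. destruct (Rle_or_lt (G y) 0) as [|Hpos]; [easy | exfalso].
  set (t := Rmax y (e - G y / (2 * (C + 1)))).
  assert (Hr : 0 < G y / (2 * (C + 1))) by (apply Rdiv_lt_0_compat; lra).
  assert (Ht : y <= t < e /\ e - t <= G y / (2 * (C + 1))).
  { unfold t. pose proof (Rmax_l y (e - G y / (2 * (C + 1)))).
    pose proof (Rmax_r y (e - G y / (2 * (C + 1)))). split; [split|]; try lra.
    apply Rmax_case; lra. }
  destruct (HG t (proj1 Ht)) as [Hmono Hbound].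
  assert (C * (e - t) <= C * (G y / (2 * (C + 1)))) by (apply Rmult_le_compat_l; lra).
  assert (C * (G y / (2 * (C + 1))) < G y).
  { apply (Rmult_lt_reg_r (2 * (C + 1))); [lra|].
    replace (C * (G y / (2 * (C + 1))) * (2 * (C + 1))) with (C * G y) by (field; lra). nra. }
  lra.
Qed.

Lemma nonneg_of_nondecreasing_from_zero (G : R -> R) y e C : e < y -> 0 <= C ->
  (forall t, e < t <= y -> G t <= G y /\ - (C * (t - e)) <= G t) -> 0 <= G y.
Proof.
  intros Hy HC HG.
  enough (Hneg : - G (- - y) <= 0) by (rewrite Ropp_involutive in Hneg; lra).
  apply (nonpos_of_nondecreasing_to_zero (fun t => - G (- t)) (- y) (- e) C); [lra | easy |].
  intros t Ht. rewrite Ropp_involutive. destruct (HG (- t)) as [H1 H2]; [lra|].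
  split; [lra|]. replace (- e - t) with (- t - e) by ring. lra.
Qed.

(** * Unique continuation *)

Definition vanishes_on (f : R -> R) (l r : R) : Prop := forall s, l < s < r -> f s = 0.

Definition zero_continuation (f : R -> R) : Prop :=
  forall x d, -1 < x < 1 -> 0 < d ->
    vanishes_on f (x - d) x \/ vanishes_on f x (x + d) ->
    exists h, 0 < h /\ vanishes_on f (x - h) (x + h).

Lemma zero_continuation_reflect (f : R -> R) :
  zero_continuation f -> zero_continuation (fun s => f (- s)).
Proof.
  intros Hf x d Hx Hd Hside.
  destruct (Hf (- x) d) as [h [Hh Hv]]; [lra | easy | |].
  - destruct Hside as [Hv|Hv]; [right | left]; intros s Hs;
      rewrite <- (Ropp_involutive s); apply Hv; lra.
  - exists h. split; [easy|]. intros s Hs. apply Hv. lra.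
Qed.

Lemma vanishes_extend_right (f : R -> R) w v : zero_continuation f ->
  -1 <= w < v -> v <= 1 -> vanishes_on f w v -> vanishes_on f w 1.
Proof.
  intros Hf Hwv Hv Hzv.
  set (E := fun y => v <= y <= 1 /\ vanishes_on f w y).
  assert (HbE : bound E) by (exists 1; intros y [Hy _]; lra).
  destruct (completeness E HbE (ex_intro _ v (conj (conj (Rle_refl v) Hv) Hzv)))
    as [l [Hub Hlub]].
  assert (Hvl : v <= l) by (apply Hub; split; [lra | easy]).
  assert (Hl1 : l <= 1) by (apply Hlub; intros y [Hy _]; lra).
  assert (Hzl : vanishes_on f w l).
  { intros s Hs. destruct (Req_dec (f s) 0) as [|Hne]; [easy | exfalso].
    assert (l <= s); [|lra].
    apply Hlub. intros y [_ Hy]. destruct (Rle_or_lt y s); [easy|].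
    exfalso. apply Hne, Hy. lra. }
  destruct (Req_dec l 1) as [<-|Hl]; [easy | exfalso].
  destruct (Hf l (l - w)) as [h [Hh Hzh]]; [lra | lra | |].
  { left. now replace (l - (l - w)) with w by ring. }
  set (t := Rmin 1 (l + h / 2)).
  assert (Ht : l < t <= 1) by (unfold t; split; [apply Rmin_case | apply Rmin_l]; lra).
  assert (t <= l); [|lra].
  apply Hub. split; [lra|]. intros s Hs. destruct (Rlt_or_le s l).
  - apply Hzl. lra.
  - apply Hzh. pose proof (Rmin_r 1 (l + h / 2)) as Ht2. fold t in Ht2. lra.
Qed.

Lemma vanishes_extend_left (f : R -> R) u w : zero_continuation f ->
  -1 <= u < w -> w <= 1 -> vanishes_on f u w -> vanishes_on f (-1) w.
Proof.
  intros Hf Huw Hw Hz s Hs. rewrite <- (Ropp_involutive s).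
  apply (vanishes_extend_right (fun s => f (- s)) (- w) (- u));
    [now apply zero_continuation_reflect | lra | lra | | lra].
  intros s' Hs'. apply Hz. lra.
Qed.

Lemma vanishes_everywhere (f : R -> R) u v : zero_continuation f ->
  -1 <= u < v -> v <= 1 -> vanishes_on f u v -> vanishes_on f (-1) 1.
Proof.
  intros Hf Huv Hv Hz.
  apply (vanishes_extend_left f u 1 Hf); [lra | lra |].
  now apply (vanishes_extend_right f u v).
Qed.

(** * Mass and supremum estimates *)

Lemma RInt_subinterval_le (f : R -> R) I p q : is_RInt f (-1) 1 I ->
  (forall t, 0 <= f t) -> -1 <= p <= q -> q <= 1 -> ex_RInt f p q /\ RInt f p q <= I.
Proof.
  intros Hi Hf Hpq Hq.
  assert (He : ex_RInt f (-1) 1) by now exists I.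
  assert (Heq : ex_RInt f (-1) q) by (apply (ex_RInt_Chasles_1 f (-1) q 1); auto; lra).
  assert (Hpq' : ex_RInt f p q) by (apply (ex_RInt_Chasles_2 f (-1) p q); auto; lra).
  assert (Hep : ex_RInt f (-1) p) by (apply (ex_RInt_Chasles_1 f (-1) p q); auto; lra).
  assert (Hq1 : ex_RInt f q 1) by (apply (ex_RInt_Chasles_2 f (-1) q 1); auto; lra).
  split; [easy|].
  pose proof (RInt_Chasles f (-1) p q Hep Hpq') as C1.
  pose proof (RInt_Chasles f (-1) q 1 Heq Hq1) as C2.
  rewrite (is_RInt_unique _ _ _ _ Hi) in C2.
  unfold plus in C1, C2; simpl in C1, C2.
  pose proof (RInt_ge_0 f (-1) p ltac:(lra) Hep (fun x _ => Hf x)).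
  pose proof (RInt_ge_0 f q 1 ltac:(lra) Hq1 (fun x _ => Hf x)).
  lra.
Qed.

Lemma is_RInt_tent x l : l <> 0 ->
  is_RInt (fun s => (1 - (s - x) / l) ^ 2) x (x + l) (l / 3).
Proof.
  intros Hl.
  set (F := fun s => - (l / 3) * (1 - (s - x) / l) ^ 3).
  replace (l / 3) with (minus (F (x + l)) (F x))
    by (unfold minus, plus, opp, F; simpl; field; easy).
  apply (is_RInt_derive (V := R_CompleteNormedModule) F).
  - intros y _. unfold F. auto_derive; [easy | field; easy].
  - intros y _. apply (ex_derive_continuous (fun s => (1 - (s - x) / l) ^ 2)).
    auto_derive. easy.
Qed.

Lemma Lipschitz_above_tent (f : R -> R) x s L l : 0 < l -> L * l <= Rabs (f x) ->
  Rabs (f s - f x) <= L * Rabs (s - x) -> Rabs (s - x) <= l ->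
  Rabs (f x) ^ 2 * (1 - Rabs (s - x) / l) ^ 2 <= f s ^ 2.
Proof.
  intros Hl HLl Hlip Hsx. set (v := Rabs (f x)) in *.
  assert (Hr : Rabs (s - x) / l <= 1).
  { apply (Rmult_le_reg_r l); [lra|]. unfold Rdiv. rewrite Rmult_assoc, Rinv_l; lra. }
  assert (HLv : L * Rabs (s - x) <= v * (Rabs (s - x) / l)).
  { replace (v * (Rabs (s - x) / l)) with (v / l * Rabs (s - x)) by (field; lra).
    apply Rmult_le_compat_r; [apply Rabs_pos|].
    apply (Rmult_le_reg_r l); [lra|]. unfold Rdiv. rewrite Rmult_assoc, Rinv_l; lra. }
  assert (Hlow : 0 <= v * (1 - Rabs (s - x) / l) <= Rabs (f s)).
  { split; [apply Rmult_le_pos; [apply Rabs_pos | lra]|].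
    pose proof (Rabs_triang_inv (f x) (f s)) as Htri. rewrite Rabs_minus_sym in Hlip.
    fold v in Htri. lra. }
  rewrite <- Rpow_mult_distr, <- (pow2_abs (f s)). apply pow_incr, Hlow.
Qed.

(* Half of the tent of height [|f x|] and half-width [l] around [x] fits in [[a, 1)] and
   carries mass [Q |f x|^2 l / 3]. *)
Lemma Lipschitz_tent_mass_le (w f : R -> R) a x L Q I l :
  is_RInt w (-1) 1 I -> (forall t, 0 <= w t) -> -1 <= a -> a <= x < 1 -> 0 <= Q ->
  0 < l -> l <= (1 - a) / 2 -> L * l <= Rabs (f x) ->
  (forall s, a <= s < 1 -> Rabs (f s - f x) <= L * Rabs (s - x) /\ Q * f s ^ 2 <= w s) ->
  Q * Rabs (f x) ^ 2 * l / 3 <= I.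
Proof.
  intros Hi Hw Ha Hx HQ Hl Hla HLl Hf.
  assert (Htent : forall s, a <= s < 1 -> Rabs (s - x) <= l ->
            Q * Rabs (f x) ^ 2 * (1 - Rabs (s - x) / l) ^ 2 <= w s).
  { intros s Hs Hsx. destruct (Hf s Hs) as [Hlip Hws].
    eapply Rle_trans; [| exact Hws]. rewrite Rmult_assoc.
    apply Rmult_le_compat_l; [easy|]. now apply (Lipschitz_above_tent f x s L l). }
  set (v := Rabs (f x)) in *.
  assert (Htent_int : forall p, p <> 0 ->
            is_RInt (fun s => Q * v ^ 2 * (1 - (s - x) / p) ^ 2) x (x + p) (Q * v ^ 2 * p / 3)).
  { intros p Hp. replace (Q * v ^ 2 * p / 3) with (Q * v ^ 2 * (p / 3)) by field.
    now apply (is_RInt_scal (fun s => (1 - (s - x) / p) ^ 2)), is_RInt_tent. }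
  destruct (Rlt_or_le x (a + (1 - a) / 2)) as [Hxr|Hxr].
  - destruct (RInt_subinterval_le w I x (x + l) Hi Hw) as [He Hle]; [lra | lra |].
    eapply Rle_trans; [|exact Hle].
    rewrite <- (is_RInt_unique _ _ _ _ (Htent_int l ltac:(lra))).
    apply RInt_le; [lra | eexists; apply Htent_int; lra | easy |].
    intros s Hs. replace (s - x) with (Rabs (s - x)) at 1 by (rewrite Rabs_right; lra).
    apply Htent; rewrite ?Rabs_right; lra.
  - destruct (RInt_subinterval_le w I (x - l) x Hi Hw) as [He Hle]; [lra | lra |].
    eapply Rle_trans; [|exact Hle].
    pose proof (is_RInt_swap _ _ _ _ (Htent_int (- l) ltac:(lra))) as Hswap.
    replace (x + - l) with (x - l) in Hswap by ring.
    match type of Hswap with is_RInt _ _ _ ?w =>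
      replace w with (Q * v ^ 2 * l / 3) in Hswap by (unfold opp; simpl; field) end.
    rewrite <- (is_RInt_unique _ _ _ _ Hswap).
    apply RInt_le; [lra | eexists; exact Hswap | easy |].
    intros s Hs. replace ((s - x) / - l) with (Rabs (s - x) / l)
      by (rewrite Rabs_left by lra; field; lra).
    apply Htent; rewrite ?Rabs_left; lra.
Qed.

Lemma abs_sup_exists (D : R -> Prop) (f : R -> R) M :
  (forall x, D x -> Rabs (f x) <= M) ->
  exists H, 0 <= H /\ (forall x, D x -> Rabs (f x) <= H) /\
    (forall H', 0 <= H' -> (forall x, D x -> Rabs (f x) <= H') -> H <= H').
Proof.
  intros HM.
  set (E := fun y => y = 0 \/ exists x, D x /\ y = Rabs (f x)).
  assert (Hb : bound E).
  { exists (Rmax M 0). intros y [->|[x [Hx ->]]]; [apply Rmax_r|].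
    eapply Rle_trans; [apply HM, Hx | apply Rmax_l]. }
  destruct (completeness E Hb (ex_intro _ 0 (or_introl eq_refl))) as [H [Hub Hlub]].
  exists H. split; [apply Hub; now left|]. split.
  - intros x Hx. apply Hub. right. now exists x.
  - intros H' H0 HH'. apply Hlub. intros y [->|[x [Hx ->]]]; auto.
Qed.

Lemma zero_of_sup_halving (f : R -> R) l r M : (forall s, l <= s <= r -> Rabs (f s) <= M) ->
  (forall m, (forall s, l <= s <= r -> Rabs (f s) <= m) ->
     forall s, l <= s <= r -> Rabs (f s) <= m / 2) ->
  forall s, l <= s <= r -> f s = 0.
Proof.
  intros HM Hhalf s Hs.
  destruct (abs_sup_exists (fun s => l <= s <= r) f M HM) as [m [Hm0 [Hm Hmin]]].
  assert (m <= m / 2) by (apply Hmin; [lra | now apply Hhalf]).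
  pose proof (Hm s Hs). pose proof (Rabs_pos (f s)). apply Rabs_eq_0. lra.
Qed.

Lemma sq_le_of_cube_or_sq_le v H U : 0 <= v <= H -> 0 <= U ->
  v ^ 3 <= U ^ 2 * H \/ v ^ 2 <= U ^ 2 -> v ^ 2 <= U * H.
Proof.
  intros Hv HU Hc. destruct (Rle_or_lt v U) as [HvU|HvU].
  - assert (v * v <= U * v) by (apply Rmult_le_compat_r; lra).
    assert (U * v <= U * H) by (apply Rmult_le_compat_l; lra). simpl. lra.
  - destruct Hc as [Hc|Hc]; [| exfalso; simpl in Hc; nra].
    apply (Rmult_le_reg_r v); [lra|].
    assert (U * U * H <= U * H * v).
    { replace (U * U * H) with (U * H * U) by ring. apply Rmult_le_compat_l; [|lra]. nra. }
    simpl in *. nra.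
Qed.

Lemma sup_le_of_sq_le (D : R -> Prop) (f : R -> R) H U : 0 <= H -> 0 <= U ->
  (forall H', 0 <= H' -> (forall x, D x -> Rabs (f x) <= H') -> H <= H') ->
  (forall x, D x -> Rabs (f x) ^ 2 <= U * H) -> H <= U.
Proof.
  intros HH HU Hmin Hsq.
  assert (HHs : H <= sqrt (U * H)).
  { apply Hmin; [apply sqrt_pos |]. intros x Hx.
    rewrite <- (sqrt_pow2 (Rabs (f x))) by apply Rabs_pos. apply sqrt_le_1_alt, Hsq, Hx. }
  destruct (Req_dec H 0) as [->|Hne]; [easy|].
  assert (H * H <= U * H).
  { rewrite <- (sqrt_sqrt (U * H)) by (apply Rmult_le_pos; lra).
    apply Rmult_le_compat; lra. }
  nra.
Qed.

(** * The radial equation *)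

Section SturmLiouville.

Variables (b c al M : R) (phi fl : R -> R).

Definition weight (x : R) : R := (al - c ^ 2 * (1 + x) / 8) * pow1p (b - 1) x.

Hypothesis Hb : 3 / 2 <= b.
Hypothesis Hal : c ^ 2 / 4 < al.
Hypothesis HM : forall x, -1 <= x <= 1 -> Rabs (phi x) <= M.
Hypothesis Hphi : forall x, -1 < x < 1 -> ex_derive phi x.
Hypothesis Hfl_ex : forall x, -1 < x < 1 -> ex_derive fl x.
Hypothesis Hfl : forall x, -1 < x < 1 -> fl x = (1 - x) * pow1p b x * Derive phi x.
Hypothesis Hode : forall x, -1 < x < 1 -> Derive fl x = - weight x * phi x.

Let E1 := pow1p (b - 1) 1.
Let K := al * E1 * M.

Lemma al_pos : 0 < al.
Proof. pose proof (pow2_ge_0 c). lra. Qed.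

Lemma al_E1_pos : 0 < al * E1.
Proof. apply Rmult_lt_0_compat; [apply al_pos | apply pow1p_gt0]. Qed.

Lemma M_nonneg : 0 <= M.
Proof. pose proof (HM 0 ltac:(lra)). pose proof (Rabs_pos (phi 0)). lra. Qed.

Lemma K_nonneg : 0 <= K.
Proof. pose proof al_E1_pos. pose proof M_nonneg. unfold K. nra. Qed.

Lemma weight_bounds x : -1 < x < 1 -> 0 < weight x <= al * E1.
Proof.
  intros Hx. unfold weight, E1. pose proof (pow1p_gt0 (b - 1) x).
  assert (0 <= c ^ 2 * (1 + x) <= c ^ 2 * 2).
  { pose proof (pow2_ge_0 c). split; [apply Rmult_le_pos | apply Rmult_le_compat_l]; lra. }
  split; [apply Rmult_lt_0_compat; lra |].
  apply Rmult_le_compat; [lra | lra | pose proof al_pos; lra | apply pow1p_le; lra].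
Qed.

Lemma abs_Derive_fl_le u : -1 < u < 1 -> Rabs (Derive fl u) <= al * E1 * Rabs (phi u).
Proof.
  intros Hu. rewrite Hode, Rabs_mult, Rabs_Ropp by easy.
  destruct (weight_bounds u Hu). rewrite Rabs_right by lra.
  apply Rmult_le_compat_r; [apply Rabs_pos | easy].
Qed.

Lemma Derive_phi_eq x : -1 < x < 1 -> Derive phi x = fl x / ((1 - x) * pow1p b x).
Proof. intros Hx. rewrite Hfl by easy. field. split; [apply Rgt_not_eq, pow1p_gt0 | lra]. Qed.

Lemma flux_coef_bounds s : -1 < s < 1 ->
  0 < (1 - s) * pow1p b s <= pow1p b 1 * (1 - s) /\
  (1 - s) * pow1p b s <= pow1p b 1 * (1 + s).
Proof.
  intros Hs. rewrite !(pow1p_pred b) by lra.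
  set (P := pow1p (b - 1) s). set (P1 := pow1p (b - 1) 1).
  assert (HP : 0 < P) by apply pow1p_gt0.
  assert (HP1 : P <= P1) by (apply pow1p_le; lra).
  assert (H1 : (1 + s) * P <= (1 + 1) * P1) by (apply Rmult_le_compat; lra).
  assert (H2 : (1 - s) * P <= (1 + 1) * P1) by (apply Rmult_le_compat; lra).
  split; [split|].
  - apply Rmult_lt_0_compat; [| apply Rmult_lt_0_compat]; lra.
  - rewrite Rmult_comm. apply Rmult_le_compat_r; lra.
  - replace ((1 - s) * ((1 + s) * P)) with ((1 - s) * P * (1 + s)) by ring.
    apply Rmult_le_compat_r; lra.
Qed.

Lemma flux_abs_le_right H t : -1 < t < 1 -> (forall u, t <= u < 1 -> Rabs (phi u) <= H) ->
  Rabs (fl t) <= al * E1 * H * (1 - t).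
Proof.
  intros Ht HH.
  apply (flux_bound_right phi fl (fun s => (1 - s) * pow1p b s) t _ (pow1p b 1) M);
    [lra | apply pow1p_gt0 | intros s Hs | intros s Hs | intros s Hs; apply HM; lra].
  - split; [apply Hfl_ex; lra |]. eapply Rle_trans; [apply abs_Derive_fl_le; lra |].
    apply Rmult_le_compat_l; [pose proof (weight_bounds s); lra | apply HH; lra].
  - destruct (flux_coef_bounds s) as [[Hq HqP] _]; [lra|].
    split; [apply Hphi; lra |]. split; [apply Derive_phi_eq; lra | lra].
Qed.

Lemma flux_abs_le_left t : -1 < t < 1 -> Rabs (fl t) <= K * (1 + t).
Proof.
  intros Ht.
  apply (flux_bound_left phi fl (fun s => (1 - s) * pow1p b s) t _ (pow1p b 1) M);
    [lra | apply pow1p_gt0 | intros s Hs | intros s Hs | intros s Hs; apply HM; lra].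
  - split; [apply Hfl_ex; lra |]. eapply Rle_trans; [apply abs_Derive_fl_le; lra |].
    apply Rmult_le_compat_l; [pose proof (weight_bounds s); lra | apply HM; lra].
  - destruct (flux_coef_bounds s) as [[Hq _] HqP]; [lra|].
    split; [apply Hphi; lra |]. split; [apply Derive_phi_eq; lra | lra].
Qed.

Lemma flux_abs_le_right_K t : -1 < t < 1 -> Rabs (fl t) <= K * (1 - t).
Proof. intros Ht. apply flux_abs_le_right; [easy | intros u Hu; apply HM; lra]. Qed.

Lemma phi_Lipschitz a H : -1 < a -> (forall u, a <= u < 1 -> Rabs (phi u) <= H) ->
  forall s t, a <= s < 1 -> a <= t < 1 ->
  Rabs (phi s - phi t) <= al * E1 * H / pow1p b a * Rabs (s - t).
Proof.
  intros Ha HH s t Hs Ht.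
  apply (Derive_bounded_Lipschitz phi a (Rmax s t));
    [intros u Hu | split; [lra | apply Rmax_l] | split; [lra | apply Rmax_r]].
  assert (Hu1 : a <= u < 1) by (split; [lra|]; revert Hu; apply Rmax_case; lra).
  split; [apply Hphi; lra |].
  rewrite Derive_phi_eq by lra. destruct (flux_coef_bounds u) as [[Hq _] _]; [lra|].
  pose proof (flux_abs_le_right H u ltac:(lra) ltac:(intros; apply HH; lra)) as Hflu.
  pose proof (pow1p_le b a u ltac:(lra) ltac:(lra)). pose proof (pow1p_gt0 b a).
  unfold Rdiv. rewrite Rabs_mult, Rabs_inv, (Rabs_right ((1 - u) * _)) by lra.
  apply Rle_trans with (al * E1 * H * (1 - u) * / ((1 - u) * pow1p b u)).
  - apply Rmult_le_compat_r; [left; apply Rinv_0_lt_compat |]; lra.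
  - replace (al * E1 * H * (1 - u) * / ((1 - u) * pow1p b u)) with (al * E1 * H / pow1p b u)
      by (field; lra).
    assert (HcH : 0 <= al * E1 * H).
    { pose proof (HH a ltac:(lra)). pose proof (Rabs_pos (phi a)). pose proof al_E1_pos. nra. }
    apply Rmult_le_compat_l; [easy|]. apply Rinv_le_contravar; lra.
Qed.

(* On a short interval around a common zero of [phi] and [fl], [|phi|] is controlled by
   [fl], which is in turn controlled by [|phi|], with a gain [O(h^2)]. *)
Lemma phi_sup_halves z h m : 0 < h -> -1 < z - h -> z + h < 1 -> phi z = 0 -> fl z = 0 ->
  2 * (al * E1) * h ^ 2 <= (1 - (z + h)) * pow1p b (z - h) ->
  (forall s, z - h <= s <= z + h -> Rabs (phi s) <= m) ->
  forall s, z - h <= s <= z + h -> Rabs (phi s) <= m / 2.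
Proof.
  intros Hh Hzl Hzr Hpz Hfz Hsmall Hm.
  set (Cw := al * E1) in *. set (pmin := (1 - (z + h)) * pow1p b (z - h)) in *.
  assert (Hpmin : 0 < pmin) by (apply Rmult_lt_0_compat; [lra | apply pow1p_gt0]).
  assert (HCw : 0 <= Cw) by (pose proof al_E1_pos; unfold Cw; lra).
  assert (Hm0 : 0 <= m) by (pose proof (Hm z ltac:(lra)); pose proof (Rabs_pos (phi z)); lra).
  assert (Hfl_small : forall u, z - h <= u <= z + h -> Rabs (fl u) <= Cw * m * h).
  { intros u Hu. replace (fl u) with (fl u - fl z) by (rewrite Hfz; ring).
    eapply Rle_trans; [apply (Derive_bounded_Lipschitz fl (z - h) (z + h) (Cw * m)) |].
    - intros v Hv. split; [apply Hfl_ex; lra |].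
      eapply Rle_trans; [apply abs_Derive_fl_le; lra |].
      apply Rmult_le_compat_l; [easy | apply Hm, Hv].
    - exact Hu.
    - lra.
    - apply Rmult_le_compat_l; [apply Rmult_le_pos; lra |]. apply Rabs_le; lra. }
  assert (Hdphi : forall u, z - h <= u <= z + h ->
            ex_derive phi u /\ Rabs (Derive phi u) <= Cw * m * h / pmin).
  { intros u Hu. split; [apply Hphi; lra |]. rewrite Derive_phi_eq by lra.
    pose proof (pow1p_gt0 b u).
    assert (Hp : pmin <= (1 - u) * pow1p b u).
    { apply Rmult_le_compat; [lra | left; apply pow1p_gt0 | lra | apply pow1p_le; lra]. }
    unfold Rdiv. rewrite Rabs_mult, Rabs_inv, (Rabs_right ((1 - u) * _)) by lra.
    apply Rmult_le_compat; [apply Rabs_pos | left; apply Rinv_0_lt_compat; lra | |].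
    - now apply Hfl_small.
    - apply Rinv_le_contravar; lra. }
  intros s Hs. replace (phi s) with (phi s - phi z) by (rewrite Hpz; ring).
  eapply Rle_trans; [apply (Derive_bounded_Lipschitz phi (z - h) (z + h) _ Hdphi); lra |].
  assert (Rabs (s - z) <= h) by (apply Rabs_le; lra).
  apply Rle_trans with (Cw * m * h / pmin * h).
  - apply Rmult_le_compat_l; [| easy]. apply Rmult_le_pos; [| left; apply Rinv_0_lt_compat; lra].
    apply Rmult_le_pos; [apply Rmult_le_pos |]; lra.
  - replace (Cw * m * h / pmin * h) with (m * (Cw * h ^ 2) / pmin) by (field; lra).
    apply (Rmult_le_reg_r pmin); [easy|].
    replace (m * (Cw * h ^ 2) / pmin * pmin) with (m * (Cw * h ^ 2)) by (field; lra).
    nra.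
Qed.

Lemma phi_locally_unique z : -1 < z < 1 -> phi z = 0 -> fl z = 0 ->
  exists h, 0 < h /\ vanishes_on phi (z - h) (z + h).
Proof.
  intros Hz Hpz Hfz.
  set (h0 := (1 - Rabs z) / 2).
  assert (Hh0 : 0 < h0 /\ -1 < z - h0 /\ z + h0 < 1).
  { unfold h0. destruct (Rle_or_lt 0 z); [rewrite Rabs_right | rewrite Rabs_left]; lra. }
  set (p0 := (1 - (z + h0)) * pow1p b (z - h0)).
  assert (Hp0 : 0 < p0) by (apply Rmult_lt_0_compat; [lra | apply pow1p_gt0]).
  set (Cw := al * E1).
  assert (HCw : 0 <= Cw) by (pose proof al_E1_pos; unfold Cw; lra).
  set (h := Rmin h0 (Rmin 1 (p0 / (2 * (Cw + 1))))).
  assert (Hh : 0 < h /\ h <= h0 /\ h <= 1 /\ h <= p0 / (2 * (Cw + 1))).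
  { assert (0 < p0 / (2 * (Cw + 1))) by (apply Rdiv_lt_0_compat; lra).
    pose proof (Rmin_l 1 (p0 / (2 * (Cw + 1)))). pose proof (Rmin_r 1 (p0 / (2 * (Cw + 1)))).
    unfold h. pose proof (Rmin_l h0 (Rmin 1 (p0 / (2 * (Cw + 1))))).
    pose proof (Rmin_r h0 (Rmin 1 (p0 / (2 * (Cw + 1))))).
    repeat split; try lra. repeat apply Rmin_case; lra. }
  assert (Hsmall : 2 * Cw * h ^ 2 <= (1 - (z + h)) * pow1p b (z - h)).
  { apply Rle_trans with p0.
    - assert (2 * (Cw + 1) * h <= p0).
      { replace p0 with (2 * (Cw + 1) * (p0 / (2 * (Cw + 1)))) by (field; lra).
        apply Rmult_le_compat_l; lra. }
      assert (Cw * h ^ 2 <= Cw * h) by (apply Rmult_le_compat_l; [easy | simpl; nra]).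
      nra.
    - apply Rmult_le_compat; [lra | left; apply pow1p_gt0 | lra | apply pow1p_le; lra]. }
  exists h. split; [lra |]. intros s Hs.
  apply (zero_of_sup_halving phi (z - h) (z + h) M); [intros; apply HM; lra | | lra].
  intros m Hm. now apply (phi_sup_halves z h m); try lra.
Qed.

Lemma phi_zero_continuation : zero_continuation phi.
Proof.
  intros x d Hx Hd Hside.
  set (l := Rmax (-1) (x - d)). set (r := Rmin 1 (x + d)).
  assert (Hlr : -1 <= l < x /\ x < r <= 1).
  { unfold l, r. split; split;
      [apply Rmax_l | apply Rmax_case; lra | apply Rmin_case; lra | apply Rmin_l]. }
  assert (Hside' : vanishes_on phi l x \/ vanishes_on phi x r).
  { destruct Hside as [Hv|Hv]; [left | right]; intros s Hs; apply Hv;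
      [pose proof (Rmax_r (-1) (x - d)) | pose proof (Rmin_r 1 (x + d))]; unfold l, r in *; lra. }
  assert (Hfl_side : vanishes_on fl l x \/ vanishes_on fl x r).
  { destruct Hside' as [Hv|Hv]; [left | right]; intros s Hs;
      rewrite Hfl, (Derive_locally_zero phi _ _ s Hs Hv) by lra; ring. }
  assert (Hnear : forall f : R -> R,
            continuous f x -> vanishes_on f l x \/ vanishes_on f x r -> f x = 0).
  { intros f Hc Hv. apply (continuous_zero_of_near_zeros f x Hc). intros e He.
    destruct Hv as [Hv|Hv].
    - exists (x - Rmin e (x - l) / 2). assert (0 < Rmin e (x - l)) by (apply Rmin_case; lra).
      pose proof (Rmin_l e (x - l)). pose proof (Rmin_r e (x - l)).
      split; [rewrite Rabs_left; lra | apply Hv; lra].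
    - exists (x + Rmin e (r - x) / 2). assert (0 < Rmin e (r - x)) by (apply Rmin_case; lra).
      pose proof (Rmin_l e (r - x)). pose proof (Rmin_r e (r - x)).
      split; [rewrite Rabs_right; lra | apply Hv; lra]. }
  apply phi_locally_unique; [easy | apply Hnear | apply Hnear]; try easy.
  - apply (ex_derive_continuous phi), Hphi, Hx.
  - apply (ex_derive_continuous fl), Hfl_ex, Hx.
Qed.

Let x0 := (b - 1) / (b + 1).

Lemma x0_bounds : 0 < x0 < 1.
Proof.
  unfold x0. split; [apply Rdiv_lt_0_compat; lra |].
  apply (Rmult_lt_reg_r (b + 1)); [lra|]. unfold Rdiv. rewrite Rmult_assoc, Rinv_l; lra.
Qed.

Definition prufer (x : R) : R :=
  phi x * fl x - (1 - x) * pow1p b x * phi x ^ 2 / (x - x0).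

Lemma prufer_zero z : phi z = 0 -> prufer z = 0.
Proof. intros Hz. unfold prufer. rewrite Hz. unfold Rdiv. ring. Qed.

Lemma Derive_prufer_eq x : -1 < x < 1 -> x <> x0 ->
  ex_derive prufer x /\
  Derive prufer x = (1 - x) * (1 + x) * pow1p (b - 1) x * (Derive phi x - phi x / (x - x0)) ^ 2
                    + (b + 1 - al + c ^ 2 * (1 + x) / 8) * pow1p (b - 1) x * phi x ^ 2.
Proof.
  intros Hx Hx0. assert (Hpsi : x - x0 <> 0) by lra.
  eassert (Hg : is_derive prufer x _).
  { unfold prufer, pow1p. auto_derive; [| reflexivity].
    repeat split; try apply Hphi; try apply Hfl_ex; lra. }
  split; [eexists; exact Hg |]. rewrite (is_derive_unique _ _ _ Hg).
  change (Derive (fun y => phi y) x) with (Derive phi x).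
  change (Derive (fun y => fl y) x) with (Derive fl x).
  change (exp (b * ln (1 + x))) with (pow1p b x).
  rewrite Hode, Hfl, (pow1p_pred b x) by lra. unfold weight, x0 in *.
  field. split; [lra | split; [| lra]]. intros H0. apply Hx0. field_simplify_eq; lra.
Qed.

Lemma prufer_Derive_ge x : al < b + 1 -> -1 < x < 1 -> x <> x0 ->
  ex_derive prufer x /\
  0 < (b + 1 - al + c ^ 2 * (1 + x) / 8) * pow1p (b - 1) x /\
  (b + 1 - al + c ^ 2 * (1 + x) / 8) * pow1p (b - 1) x * phi x ^ 2 <= Derive prufer x.
Proof.
  intros Hal1 Hx Hx0. destruct (Derive_prufer_eq x Hx Hx0) as [Hex ->].
  split; [easy|]. pose proof (pow1p_gt0 (b - 1) x).
  assert (0 <= c ^ 2 * (1 + x)) by (apply Rmult_le_pos; [apply pow2_ge_0 | lra]).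
  split; [apply Rmult_lt_0_compat; lra |].
  assert (0 <= (1 - x) * (1 + x) * pow1p (b - 1) x * (Derive phi x - phi x / (x - x0)) ^ 2).
  { apply Rmult_le_pos; [| apply pow2_ge_0]. apply Rmult_le_pos; [apply Rmult_le_pos |]; lra. }
  lra.
Qed.

Lemma prufer_nondecreasing y1 y2 : al < b + 1 -> y1 <= y2 ->
  x0 < y1 /\ y2 < 1 \/ -1 < y1 /\ y2 < x0 -> prufer y1 <= prufer y2.
Proof.
  intros Hal1 H12 Hy. pose proof x0_bounds.
  apply Derive_nonneg_le; [easy|]. intros x Hx.
  destruct (prufer_Derive_ge x Hal1) as [Hex [Hgap Hge]]; [lra | lra |].
  split; [easy|]. pose proof (pow2_ge_0 (phi x)). nra.
Qed.

Lemma prufer_nonpos_right y : al < b + 1 -> x0 < y < 1 -> prufer y <= 0.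
Proof.
  intros Hal1 Hy. pose proof x0_bounds. pose proof K_nonneg.
  pose proof M_nonneg as HM0.
  apply (nonpos_of_nondecreasing_to_zero prufer y 1 (M * K)); [lra | nra |].
  intros t Ht. split; [apply prufer_nondecreasing; lra |].
  assert (0 <= (1 - t) * pow1p b t * phi t ^ 2 / (t - x0)).
  { apply Rmult_le_pos; [| left; apply Rinv_0_lt_compat; lra].
    apply Rmult_le_pos; [apply Rmult_le_pos; [lra | left; apply pow1p_gt0] | apply pow2_ge_0]. }
  assert (phi t * fl t <= M * K * (1 - t)).
  { eapply Rle_trans; [apply Rle_abs |]. rewrite Rabs_mult, Rmult_assoc.
    apply Rmult_le_compat; [apply Rabs_pos | apply Rabs_pos | apply HM; lra |].
    apply flux_abs_le_right_K. lra. }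
  unfold prufer. lra.
Qed.

Lemma prufer_nonneg_left y : al < b + 1 -> -1 < y < x0 -> 0 <= prufer y.
Proof.
  intros Hal1 Hy. pose proof x0_bounds. pose proof K_nonneg.
  pose proof M_nonneg as HM0.
  apply (nonneg_of_nondecreasing_from_zero prufer y (-1) (M * K)); [lra | nra |].
  intros t Ht. split; [apply prufer_nondecreasing; lra |].
  assert ((1 - t) * pow1p b t * phi t ^ 2 / (t - x0) <= 0).
  { assert (0 <= (1 - t) * pow1p b t * phi t ^ 2).
    { apply Rmult_le_pos; [apply Rmult_le_pos; [lra | left; apply pow1p_gt0] | apply pow2_ge_0]. }
    assert (/ (t - x0) < 0) by (apply Rinv_lt_0_compat; lra).
    unfold Rdiv. nra. }
  assert (- (M * K * (t - -1)) <= phi t * fl t).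
  { assert (Hprod : Rabs (phi t * fl t) <= M * K * (t - -1)).
    { rewrite Rabs_mult, Rmult_assoc. replace (t - -1) with (1 + t) by ring.
      apply Rmult_le_compat; [apply Rabs_pos | apply Rabs_pos | apply HM; lra |].
      apply flux_abs_le_left. lra. }
    apply Rabs_le_between in Hprod. lra. }
  unfold prufer. lra.
Qed.

Lemma prufer_near_x0 t : phi x0 = 0 -> 0 <= t < 1 -> t <> x0 ->
  Rabs (prufer t) <= K ^ 2 * (1 + pow1p b 1) * Rabs (t - x0).
Proof.
  intros Hz Ht Htx. pose proof x0_bounds. pose proof K_nonneg.
  assert (Hlip : Rabs (phi t) <= K * Rabs (t - x0)).
  { replace (phi t) with (phi t - phi x0) by (rewrite Hz; ring).
    pose proof (phi_Lipschitz 0 M ltac:(lra) ltac:(intros; apply HM; lra) t x0) as Hl.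
    rewrite pow1p_0, Rdiv_1_r in Hl. apply Hl; lra. }
  assert (Hfl1 : Rabs (fl t) <= K).
  { pose proof (flux_abs_le_right_K t ltac:(lra)).
    assert (K * (1 - t) <= K * 1) by (apply Rmult_le_compat_l; lra). lra. }
  assert (Hr : 0 < Rabs (t - x0)) by (apply Rabs_pos_lt; lra).
  set (r := Rabs (t - x0)) in *.
  unfold prufer. unfold Rminus at 1. eapply Rle_trans; [apply Rabs_triang |]. rewrite Rabs_Ropp.
  assert (H1 : Rabs (phi t * fl t) <= K ^ 2 * r).
  { rewrite Rabs_mult. apply Rle_trans with (K * r * K); [| right; ring].
    apply Rmult_le_compat; [apply Rabs_pos | apply Rabs_pos | easy | easy]. }
  assert (H2 : Rabs ((1 - t) * pow1p b t * phi t ^ 2 / (t - x0)) <= K ^ 2 * pow1p b 1 * r).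
  { unfold Rdiv. rewrite !Rabs_mult, Rabs_inv. fold r.
    rewrite (Rabs_right (1 - t)), (Rabs_right (pow1p b t)), <- RPow_abs
      by (try left; try apply pow1p_gt0; lra).
    assert (HE : pow1p b t <= pow1p b 1) by (apply pow1p_le; lra).
    pose proof (pow1p_gt0 b t).
    assert (Hp2 : Rabs (phi t) ^ 2 <= (K * r) ^ 2)
      by (apply pow_incr; split; [apply Rabs_pos | easy]).
    apply Rle_trans with (1 * pow1p b 1 * (K * r) ^ 2 * / r).
    - apply Rmult_le_compat_r; [left; apply Rinv_0_lt_compat; easy |].
      apply Rmult_le_compat; [| apply pow2_ge_0 | apply Rmult_le_compat; lra | easy].
      apply Rmult_le_pos; lra.
    - right. field. lra. }
  replace (K ^ 2 * (1 + pow1p b 1) * r) with (K ^ 2 * r + K ^ 2 * pow1p b 1 * r) by ring.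
  lra.
Qed.

Lemma phi_zero_of_prufer_vanishing l r : al < b + 1 -> -1 <= l < r -> r <= 1 ->
  ~ (l < x0 < r) -> vanishes_on prufer l r -> vanishes_on phi l r.
Proof.
  intros Hal1 Hlr Hr Hx0 Hz y Hy.
  destruct (prufer_Derive_ge y Hal1) as [_ [Hgap Hge]];
    [lra | intros Hyx; apply Hx0; rewrite <- Hyx; easy |].
  rewrite (Derive_locally_zero prufer l r y Hy Hz) in Hge.
  assert (phi y ^ 2 <= 0) by (apply (Rmult_le_reg_l _ _ _ Hgap); lra).
  nra.
Qed.

Lemma prufer_const_nonneg : 0 <= K ^ 2 * (1 + pow1p b 1).
Proof. pose proof (pow1p_gt0 b 1). pose proof (pow2_ge_0 K). nra. Qed.

Lemma phi_vanishes_after_zero z : al < b + 1 -> x0 <= z < 1 -> phi z = 0 ->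
  vanishes_on phi z 1.
Proof.
  intros Hal1 Hz Hpz. pose proof x0_bounds.
  apply phi_zero_of_prufer_vanishing; [easy | lra | lra | lra |].
  intros y Hy. apply Rle_antisym; [apply prufer_nonpos_right; lra |].
  destruct (Req_dec z x0) as [Hzx|Hne].
  - rewrite Hzx in Hpz, Hy.
    apply (nonneg_of_nondecreasing_from_zero prufer y x0 (K ^ 2 * (1 + pow1p b 1)));
      [lra | apply prufer_const_nonneg |].
    intros t Ht. split; [apply prufer_nondecreasing; lra |].
    pose proof (prufer_near_x0 t Hpz ltac:(lra) ltac:(lra)) as Hnear.
    rewrite (Rabs_right (t - x0)) in Hnear by lra. apply Rabs_le_between in Hnear. lra.
  - rewrite <- (prufer_zero z Hpz). apply prufer_nondecreasing; lra.
Qed.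

Lemma phi_vanishes_before_zero z : al < b + 1 -> -1 < z <= x0 -> phi z = 0 ->
  vanishes_on phi (-1) z.
Proof.
  intros Hal1 Hz Hpz. pose proof x0_bounds.
  apply phi_zero_of_prufer_vanishing; [easy | lra | lra | lra |].
  intros y Hy. apply Rle_antisym; [| apply prufer_nonneg_left; lra].
  destruct (Req_dec z x0) as [Hzx|Hne].
  - rewrite Hzx in Hpz, Hy. set (y' := Rmax y 0).
    assert (Hy' : y <= y' /\ 0 <= y' < x0).
    { unfold y'. split; [apply Rmax_l | split; [apply Rmax_r | apply Rmax_case; lra]]. }
    apply Rle_trans with (prufer y'); [apply prufer_nondecreasing; lra |].
    apply (nonpos_of_nondecreasing_to_zero prufer y' x0 (K ^ 2 * (1 + pow1p b 1)));
      [lra | apply prufer_const_nonneg |].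
    intros t Ht. split; [apply prufer_nondecreasing; lra |].
    pose proof (prufer_near_x0 t Hpz ltac:(lra) ltac:(lra)) as Hnear.
    rewrite (Rabs_left (t - x0)) in Hnear by lra. apply Rabs_le_between in Hnear. lra.
  - rewrite <- (prufer_zero z Hpz). apply prufer_nondecreasing; lra.
Qed.

(* Without zeros, [sg fl] is strictly decreasing yet vanishes at both endpoints. *)
Lemma phi_has_zero : exists z, -1 < z < 1 /\ phi z = 0.
Proof.
  apply NNPP. intros Hnz.
  destruct (constant_sign phi Hphi) as [sg [Hsg Hpos]].
  { intros x Hx Hx0. apply Hnz. now exists x. }
  pose proof K_nonneg.
  set (G := fun t => - (sg * fl t)).
  assert (HdG : forall x, -1 < x < 1 -> ex_derive G x /\ Derive G x = weight x * (sg * phi x)).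
  { intros x Hx. unfold G. split.
    - apply (ex_derive_opp (fun t => sg * fl t)), ex_derive_scal, Hfl_ex, Hx.
    - rewrite Derive_opp, Derive_scal, Hode by easy. ring. }
  assert (Hmono : forall t1 t2, -1 < t1 <= t2 -> t2 < 1 -> G t1 <= G t2).
  { intros t1 t2 H12 Ht2. apply Derive_nonneg_le; [lra|]. intros x Hx.
    destruct (HdG x) as [Hex ->]; [lra|]. split; [easy|].
    destruct (weight_bounds x) as [Hw _]; [lra|]. pose proof (Hpos x). nra. }
  assert (HGabs : forall t, -1 < t < 1 -> Rabs (G t) = Rabs (fl t)).
  { intros t Ht. unfold G. rewrite Rabs_Ropp, Rabs_mult, Hsg. ring. }
  assert (HGzero : forall y, -1 < y < 1 -> G y = 0).
  { intros y Hy. apply Rle_antisym.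
    - apply (nonpos_of_nondecreasing_to_zero G y 1 K); [lra | easy |]. intros t Ht.
      split; [apply Hmono; lra |]. eapply Rle_trans; [apply Rle_abs |].
      rewrite HGabs by lra. apply flux_abs_le_right_K. lra.
    - apply (nonneg_of_nondecreasing_from_zero G y (-1) K); [lra | easy |]. intros t Ht.
      split; [apply Hmono; lra |].
      assert (HGt : Rabs (G t) <= K * (t - -1)).
      { rewrite HGabs by lra. replace (t - -1) with (1 + t) by ring. apply flux_abs_le_left. lra. }
      apply Rabs_le_between in HGt. lra. }
  destruct (HdG 0) as [_ HD0]; [lra|].
  rewrite (Derive_locally_zero G (-1) 1 0) in HD0 by (easy || lra).
  destruct (weight_bounds 0) as [Hw _]; [lra|]. pose proof (Hpos 0). nra.
Qed.

Hypothesis Hnorm :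
  is_RInt (fun t => rpow (1 + t) (b - 1) * Rabs (phi t) ^ 2) (-1) 1 (rpow 2 (b - 1)).

Lemma phi_not_vanishing : ~ vanishes_on phi (-1) 1.
Proof.
  intros Hz.
  assert (Hi0 : is_RInt (fun _ => 0) (-1) 1 (rpow 2 (b - 1))).
  { apply (is_RInt_ext (fun t => rpow (1 + t) (b - 1) * Rabs (phi t) ^ 2)); [| easy].
    intros x Hx. rewrite Rmin_left, Rmax_right in Hx by lra.
    rewrite Hz, Rabs_R0 by lra. change (rpow (1 + x) (b - 1) * 0 ^ 2 = 0). ring. }
  pose proof (is_RInt_const (V := R_NormedModule) (-1) 1 0) as Hc.
  assert (Heq : rpow 2 (b - 1) = 0).
  { rewrite <- (is_RInt_unique _ _ _ _ Hi0), (is_RInt_unique _ _ _ _ Hc).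
    unfold scal; simpl; unfold mult; simpl. ring. }
  revert Heq. unfold rpow, Rpower. destruct (Rle_dec 2 0); [lra |]. apply Rgt_not_eq, exp_pos.
Qed.

Lemma b_succ_le_al : b + 1 <= al.
Proof.
  destruct (Rle_or_lt (b + 1) al) as [|Hal1]; [easy | exfalso].
  apply phi_not_vanishing. pose proof x0_bounds.
  destruct phi_has_zero as [z [Hz Hpz]].
  destruct (Rle_or_lt x0 z).
  - apply (vanishes_everywhere phi z 1 phi_zero_continuation); [lra | lra |].
    apply phi_vanishes_after_zero; [easy | lra | easy].
  - apply (vanishes_everywhere phi (-1) z phi_zero_continuation); [lra | lra |].
    apply phi_vanishes_before_zero; [easy | lra | easy].
Qed.

Let a := (b - 1) / b.
Let Pa := pow1p b a.
Let Qa := pow1p (b - 1) a.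

Lemma a_bounds : 0 < a < 1 /\ 1 - a = / b.
Proof.
  unfold a. split; [split |].
  - apply Rdiv_lt_0_compat; lra.
  - apply (Rmult_lt_reg_r b); [lra|]. unfold Rdiv. rewrite Rmult_assoc, Rinv_l; lra.
  - field. lra.
Qed.

Lemma phi_tent_mass_le H x l : (forall y, a <= y < 1 -> Rabs (phi y) <= H) -> a <= x < 1 ->
  0 < l -> l <= (1 - a) / 2 -> al * E1 * H / Pa * l <= Rabs (phi x) ->
  Rabs (phi x) ^ 2 * l <= 3 * E1 / Qa.
Proof.
  intros HH Hx Hl Hla HLl. destruct a_bounds as [Ha _].
  assert (HQa : 0 < Qa) by apply pow1p_gt0.
  assert (Hmass : Qa * Rabs (phi x) ^ 2 * l / 3 <= E1).
  { apply (Lipschitz_tent_mass_le (fun t => rpow (1 + t) (b - 1) * Rabs (phi t) ^ 2) phi a x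
      (al * E1 * H / Pa)); [| intros t; apply Rmult_le_pos; [apply rpow_nonneg | apply pow2_ge_0]
      | lra | lra | lra | lra | lra | easy |].
    - replace E1 with (rpow 2 (b - 1)); [easy |].
      unfold E1. rewrite <- rpow_pow1p by lra. now replace (1 + 1) with 2 by ring.
    - intros s Hs. split.
      + apply (phi_Lipschitz a H); [lra | exact HH | lra | lra].
      + rewrite rpow_pow1p, pow2_abs by lra. apply Rmult_le_compat_r; [apply pow2_ge_0 |].
        apply pow1p_le; lra. }
  apply (Rmult_le_reg_l (Qa / 3)); [apply Rdiv_lt_0_compat; lra |].
  replace (Qa / 3 * (3 * E1 / Qa)) with E1 by (field; lra).
  replace (Qa / 3 * (Rabs (phi x) ^ 2 * l)) with (Qa * Rabs (phi x) ^ 2 * l / 3) by field.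
  easy.
Qed.

(* The tent is cut either by the slope bound [L] or by the room left in [[a, 1)]. *)
Lemma phi_cube_or_sq_le H x : (forall y, a <= y < 1 -> Rabs (phi y) <= H) -> a <= x < 1 ->
  Rabs (phi x) ^ 3 <= 3 * E1 / Qa * (al * E1 / Pa) * H \/
  Rabs (phi x) ^ 2 <= 3 * E1 / Qa * (2 * b).
Proof.
  intros HH Hx. destruct a_bounds as [Ha H1a].
  assert (HE1 : 0 < E1) by apply pow1p_gt0. assert (HPa : 0 < Pa) by apply pow1p_gt0.
  assert (HQa : 0 < Qa) by apply pow1p_gt0. pose proof al_pos.
  set (N := 3 * E1 / Qa). assert (HN : 0 < N) by (apply Rdiv_lt_0_compat; lra).
  set (v := Rabs (phi x)). assert (HvH : v <= H) by (apply HH; lra).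
  destruct (Req_dec v 0) as [Hv|Hv].
  { right. rewrite Hv. simpl. rewrite Rmult_0_l. apply Rmult_le_pos; lra. }
  assert (Hvp : 0 < v) by (pose proof (Rabs_pos (phi x)) as Hv0; fold v in Hv0; lra).
  set (L := al * E1 * H / Pa).
  assert (HL : 0 < L).
  { apply Rdiv_lt_0_compat; [apply Rmult_lt_0_compat; [apply Rmult_lt_0_compat |] |]; lra. }
  destruct (Rle_or_lt (v / L) ((1 - a) / 2)) as [Hc|Hc].
  - left. assert (Hvl : v ^ 2 * (v / L) <= N).
    { apply (phi_tent_mass_le H); [easy | easy | apply Rdiv_lt_0_compat; lra | easy |].
      fold L v. right. field. lra. }
    replace (N * (al * E1 / Pa) * H) with (N * L) by (unfold L; field; lra).
    apply (Rmult_le_reg_r (/ L)); [apply Rinv_0_lt_compat; lra |].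
    replace (N * L * / L) with N by (field; lra).
    replace (v ^ 3 * / L) with (v ^ 2 * (v / L)) by (field; lra). easy.
  - right. assert (Hvl : v ^ 2 * ((1 - a) / 2) <= N).
    { apply (phi_tent_mass_le H); [easy | easy | lra | lra |].
      fold L v. apply (Rmult_le_reg_r (/ L)); [apply Rinv_0_lt_compat; lra |].
      replace (L * ((1 - a) / 2) * / L) with ((1 - a) / 2) by (field; lra). lra. }
    rewrite H1a in Hvl.
    apply (Rmult_le_reg_r (/ b / 2)); [apply Rmult_lt_0_compat; [apply Rinv_0_lt_compat |]; lra |].
    replace (N * (2 * b) * (/ b / 2)) with N by (field; lra). lra.
Qed.

Lemma phi_bound_near_1 : forall x, a <= x < 1 ->
  Rabs (phi x) <= sqrt (27 / 4 * (2 * pow1p b 1) * (b - 1) * al).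
Proof.
  destruct (ratio_constants_le b al Hb b_succ_le_al) as [Hc1 Hc2].
  fold E1 a Pa Qa in Hc1, Hc2.
  set (U2 := 27 / 4 * (2 * pow1p b 1) * (b - 1) * al) in *.
  destruct a_bounds as [Ha _].
  destruct (abs_sup_exists (fun y => a <= y < 1) phi M) as [H [HH0 [HH Hmin]]].
  { intros y Hy. apply HM. lra. }
  assert (HU2 : 0 <= U2).
  { eapply Rle_trans; [| exact Hc2]. pose proof (pow1p_gt0 (b - 1) 1).
    pose proof (pow1p_gt0 (b - 1) a). apply Rmult_le_pos; [| lra].
    apply Rdiv_le_0_compat; unfold E1, Qa; lra. }
  assert (HU : sqrt U2 ^ 2 = U2) by (simpl; rewrite Rmult_1_r; apply sqrt_sqrt, HU2).
  assert (HHU : H <= sqrt U2).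
  { apply (sup_le_of_sq_le (fun y => a <= y < 1) phi); [easy | apply sqrt_pos | easy |].
    intros y Hy.
    apply sq_le_of_cube_or_sq_le; [split; [apply Rabs_pos | apply HH, Hy] | apply sqrt_pos |].
    rewrite HU. destruct (phi_cube_or_sq_le H y HH Hy); [left | right]; [| lra].
    eapply Rle_trans; [eassumption | apply Rmult_le_compat_r; easy]. }
  intros x Hx. eapply Rle_trans; [apply HH, Hx | exact HHU].
Qed.

End SturmLiouville.

Lemma beta_md_ge_3_2 m d : (1 <= d)%nat -> 1 < beta_md m d -> 3 / 2 <= beta_md m d.
Proof.
  intros Hd Hb. unfold beta_md in *. apply le_INR in Hd. simpl in Hd.
  destruct m as [|m]; [| rewrite S_INR in *; pose proof (pos_INR m); lra].
  (* [d / 2 > 1] with [d] a natural number forces [d >= 3]. *)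
  destruct d as [|[|[|d]]]; rewrite ?S_INR in *; simpl in *; try lra.
  pose proof (pos_INR d). lra.
Qed.

Lemma bound_constant_eq b al : 1 <= b -> 0 <= al ->
  3 * sqrt 3 / 2 * sqrt (rpow 2 (b + 1) * (b - 1)) * sqrt al =
  sqrt (27 / 4 * (2 * pow1p b 1) * (b - 1) * al).
Proof.
  intros Hb Hal.
  assert (H2 : rpow 2 (b + 1) = 2 * pow1p b 1).
  { replace 2 with (1 + 1) at 1 by ring. rewrite rpow_pow1p, (pow1p_pred (b + 1)) by lra.
    replace (b + 1 - 1) with b by ring. ring. }
  rewrite H2.
  pose proof (pow1p_gt0 b 1).
  assert (HX : 0 <= 2 * pow1p b 1 * (b - 1)) by nra.
  rewrite Rmult_assoc, (Rmult_comm 2), !Rmult_assoc, <- (Rmult_assoc (27 / 4)).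
  rewrite !sqrt_mult_alt by nra.
  replace (sqrt (27 / 4)) with (3 * sqrt 3 / 2); [ring |].
  rewrite <- (sqrt_pow2 (3 * sqrt 3 / 2)) by (pose proof (sqrt_pos 3); lra).
  f_equal. replace ((3 * sqrt 3 / 2) ^ 2) with (9 / 4 * (sqrt 3 * sqrt 3)) by field.
  rewrite sqrt_sqrt by lra. field.
Qed.

Theorem proposition3p8 (m d : nat) (c alpha : R) (phi : R -> R) :
  (1 <= d)%nat ->
  0 < c ->
  1 < beta_md m d ->
  (* phi is bounded and continuous on [-1,1] *)
  (exists M : R, forall x, -1 <= x <= 1 -> Rabs (phi x) <= M) ->
  (forall x, -1 <= x <= 1 ->
     filterlim phi (within (fun y => -1 <= y <= 1) (locally x)) (locally (phi x))) ->
  (* phi solves the ODE on (-1,1) *)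
  (forall x, -1 < x < 1 -> ex_derive phi x) ->
  (forall x, -1 < x < 1 -> ex_derive (flux m d phi) x) ->
  (forall x, -1 < x < 1 ->
     Derive (flux m d phi) x
     + (alpha - c ^ 2 * (1 + x) / 8) * rpow (1 + x) (beta_md m d - 1) * phi x = 0) ->
  (* normalization *)
  is_RInt (fun t => rpow (1 + t) (beta_md m d - 1) * (Rabs (phi t)) ^ 2) (-1) 1
          (rpow 2 (beta_md m d - 1)) ->
  c ^ 2 / 4 < alpha ->
  forall eta, a_md m d <= eta <= 1 ->
    Rabs (phi eta) <=
      3 * sqrt 3 / 2 * sqrt (rpow 2 (beta_md m d + 1) * (beta_md m d - 1)) * sqrt alpha.
Proof.
  intros Hd _ Hb1 [M HM] Hcont Hdphi Hdfl Hode Hnorm Hal eta Heta.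
  pose proof (beta_md_ge_3_2 m d Hd Hb1) as Hb.
  assert (Ha : a_md m d = (beta_md m d - 1) / beta_md m d)
    by (unfold a_md, beta_md in *; field; lra).
  set (b := beta_md m d) in *.
  assert (Hbound : forall x, (b - 1) / b <= x < 1 ->
            Rabs (phi x) <= sqrt (27 / 4 * (2 * pow1p b 1) * (b - 1) * alpha)).
  { apply (phi_bound_near_1 b c alpha M phi (flux m d phi)); try easy.
    - intros x Hx. unfold flux. fold b. now rewrite rpow_pow1p by lra.
    - intros x Hx. specialize (Hode x Hx). rewrite rpow_pow1p in Hode by lra.
      unfold weight. lra. }
  rewrite bound_constant_eq by (pose proof (pow2_ge_0 c); lra).
  rewrite Ha in Heta. destruct (a_bounds b Hb) as [Hab _].
  destruct (Rlt_or_le eta 1) as [Hlt|Hge]; [apply Hbound; lra |].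
  replace eta with 1 by lra.
  apply (abs_le_at_right_end phi ((b - 1) / b)); [lra | apply Hcont; lra | easy].
Qed.
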